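(* For every integer $n\geq 2$, there is a binary tree with $n$ leaves, all at depth $\lceil \log n \rceil$, and at most $2n+\lceil \log n \rceil-2$ vertices.
   Context: A binary tree is a rooted tree in which every vertex has at most two children. The depth of a vertex is its distance from the root. $\log$ denotes the logarithm to base $2$. *)

From mathcomp Require Import all_boot.
Set Implicit Arguments. Unset Strict Implicit. Unset Printing Implicit Defensive.

Inductive btree : Type :=
| Lf : btree
| N1 : btree -> btree
| N2 : btree -> btree -> btree.

Fixpoint nvert (t : btree) : nat :=
  match t with
  | Lf => 1
  | N1 l => (nvert l).+1
  | N2 l r => (nvert l + nvert r).+1
  end.

Fixpoint nleaves (t : btree) : nat :=
  match t with
  | Lf => 1
  | N1 l => nleaves l
  | N2 l r => nleaves l + nleaves r
  end.

Fixpoint leaf_depths (t : btree) : seq nat :=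
  match t with
  | Lf => [:: 0]
  | N1 l => map S (leaf_depths l)
  | N2 l r => map S (leaf_depths l ++ leaf_depths r)
  end.

(* ceil (log_2 n) for n >= 1: the least e with n <= 2^e *)
Definition ceil_log2 (n : nat) : nat := up_log 2 n.

From mathcomp Require Import all_boot zify.

(* Take [d = ceil_log2 n], so that [2^(d-1) < n <= 2^d].  Greedily, a tree
   with [m <= 2^d] leaves at depth [d] is a unary root above such a tree of
   depth [d-1] if [m <= 2^(d-1)], and otherwise a complete tree of depth [d-1]
   next to such a tree with [m - 2^(d-1)] leaves.  Every level costs at most
   one unary vertex beyond the [2m - 1] vertices of a binary tree with [m]
   leaves; since [n > 2^(d-1)], the root of the tree for [n] is binary, which
   saves one more vertex. *)

Fixpoint complete_tree (d : nat) : btree :=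
  if d is d'.+1 then N2 (complete_tree d') (complete_tree d') else Lf.

Fixpoint level_tree (d n : nat) : btree :=
  if d is d'.+1 then
    if n <= 2 ^ d' then N1 (level_tree d' n)
    else N2 (complete_tree d') (level_tree d' (n - 2 ^ d'))
  else Lf.

Lemma all_eqS_map (d : nat) (s : seq nat) :
  all (fun x => x == d.+1) (map S s) = all (fun x => x == d) s.
Proof. by rewrite all_map; apply: eq_all => x /=; rewrite eqSS. Qed.

Lemma nleaves_complete_tree (d : nat) : nleaves (complete_tree d) = 2 ^ d.
Proof. by elim: d => //= d ->; rewrite expnS mul2n addnn. Qed.

Lemma nvert_complete_tree (d : nat) : (nvert (complete_tree d)).+1 = 2 ^ d.+1.
Proof. by elim: d => //= d IHd; rewrite [2 ^ d.+2]expnS -IHd; lia. Qed.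

Lemma leaf_depths_complete_tree (d : nat) :
  all (fun x => x == d) (leaf_depths (complete_tree d)).
Proof. by elim: d => //= d IHd; rewrite all_eqS_map all_cat IHd. Qed.

Lemma leaf_depths_level_tree (d n : nat) :
  all (fun x => x == d) (leaf_depths (level_tree d n)).
Proof.
elim: d n => //= d IHd n; case: ifP => _ /=; rewrite all_eqS_map //.
by rewrite all_cat leaf_depths_complete_tree IHd.
Qed.

Lemma nleaves_level_tree (d n : nat) :
  0 < n <= 2 ^ d -> nleaves (level_tree d n) = n.
Proof.
elim: d n => [|d IHd] n /andP[n_gt0 n_le] /=; first by move: n_le; lia.
case: ifP => [n_le' | /negbT] /=; first by rewrite IHd ?n_gt0.
rewrite -ltnNge => n_gt; rewrite nleaves_complete_tree IHd; first by lia.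
by move: n_le; rewrite expnS; lia.
Qed.

Lemma nvert_level_tree (d n : nat) :
  0 < n <= 2 ^ d -> nvert (level_tree d n) < 2 * n + d.
Proof.
elim: d n => [|d IHd] n /andP[n_gt0 n_le] /=; first by move: n_le; lia.
case: ifP => [n_le' | /negbT] /=.
  by have := IHd n; rewrite n_gt0 n_le'; lia.
rewrite -ltnNge => n_gt.
have := IHd (n - 2 ^ d); have := nvert_complete_tree d.
by move: n_le; rewrite !expnS; lia.
Qed.

Lemma nvert_level_tree_binary_root (d n : nat) :
  2 ^ d < n <= 2 ^ d.+1 -> (nvert (level_tree d.+1 n)).+1 < 2 * n + d.+1.
Proof.
move=> /andP[n_gt n_le] /=; rewrite (ltn_geF n_gt) /=.
have := nvert_level_tree d (n - 2 ^ d); have := nvert_complete_tree d.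
by move: n_le; rewrite !expnS; lia.
Qed.

Theorem lemma2p1 (n : nat) : 2 <= n ->
  exists t : btree,
    [/\ nleaves t = n,
        all (fun d => d == ceil_log2 n) (leaf_depths t)
      & nvert t <= 2 * n + ceil_log2 n - 2].
Proof.
move=> n_gt1; have := up_log_bounds (isT : 1 < 2) n_gt1.
have := up_log_gt0 2 n; rewrite n_gt1 -/(ceil_log2 n).
case: (ceil_log2 n) => // d _ /= n_bounds.
exists (level_tree d.+1 n); split.
- by apply: nleaves_level_tree; move: n_bounds; lia.
- exact: leaf_depths_level_tree.
- by have := nvert_level_tree_binary_root _ _ n_bounds; lia.
Qed.
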